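(* Let $F=(F_1,\ldots,F_{\ell})$ be an $m$-suitable rooted forest-tuple with $m>e(F)$. Let $B$ be a complete graph on $m+v(F)-e(F)$ vertices, all edges free, and fix an injective assignment of the roots of $F$ to vertices of $B$. Then, playing the Waiter-Client game on $B$, Waiter can force a red copy $\bar F=\bar F_1 \cup \cdots \cup \bar F_{\ell}$ of $F_1 \cup \cdots \cup F_{\ell}$ (with $\bar F_i$ the copy of $F_i$) within $e(F)$ rounds such that: (a) every root is mapped to its assigned vertex; (b) no edge between two images of roots is colored; (c) for every $i\in[\ell]$ there are no blue edges with both endpoints in $V(\bar F_i)$; (d) for every $i\in[\ell]$ there are no red edges with both endpoints in $V(\bar F_i)$ other than the edges of $\bar F_i$; (e) every colored edge intersects $V(\bar F)$; (f) every vertex not in $V(\bar F)$ is incident with at most one colored edge, and the other endpoint of such an edge is not a leaf of $\bar F$.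
   Context: A rooted forest is a forest each of whose components contains exactly one designated vertex, its root. A leaf is a vertex of degree 1 that is not a root. A rooted forest-tuple is a tuple $F=(F_1,\ldots,F_\ell)$ of pairwise vertex-disjoint rooted forests with $e(F_i)>0$ for some $i$; $v(F)$ and $e(F)$ are the total numbers of vertices and edges. Define $a(F)=\max_i e(F_i)$, $k(F)=|\{i: e(F_i)=a(F)\}|$, $t(F)=|\{i: e(F_i)>0\}|$. $F$ is suitable if $3a(F)+k(F)-e(F)\le 2$, or if $a(F)=1$ and $t(F)\ge 4$. A rooted forest-tuple $F=(F_1,\dots,F_\ell)$ is a valid subforest of a rooted forest-tuple $G=(G_1,\dots,G_{\ell''})$ if $\ell\le\ell''$, $F_i\subseteq G_i$ for every $i\in[\ell]$, and every root of $F_i$ is a root of $G_i$. $F$ is $m$-suitable if it is a valid subforest of some suitable rooted forest-tuple $G$ with $e(G)=m$. Waiter-Client game on $B$: in each round Waiter offers two free edges, Client colors one red and the other becomes blue. *)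

From mathcomp Require Import all_boot.
Set Implicit Arguments. Unset Strict Implicit. Unset Printing Implicit Defensive.

(* A rooted forest-tuple F = (F_1,...,F_ell) on the finite vertex type V:  *)
(* vertex x belongs to the forest F_(part x) (so the F_i are pairwise      *)
(* vertex-disjoint and V is the disjoint union of their vertex sets);      *)
Record rft (V : finType) := RFT {
  ell : nat;
  part : V -> 'I_ell;
  adj : rel V;
  rroots : {set V}
}.

Section Defs.
Variable V : finType.
Variable F : rft V.

Definition vset (i : 'I_(ell F)) : {set V} := [set x | part F x == i].

Definition edges : {set {set V}} :=
  [set e : {set V} | [exists x, exists y, adj F x y && (e == [set x; y])]].

Definition e_i (i : 'I_(ell F)) : nat := #|[set e in edges | e \subset vset i]|.

Definition eF : nat := #|edges|.
Definition vF : nat := #|V|.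

Definition aF : nat := \max_(i < ell F) e_i i.
Definition kF : nat := #|[set i : 'I_(ell F) | e_i i == aF]|.
Definition tF : nat := #|[set i : 'I_(ell F) | 0 < e_i i]|.

Definition has_cycle : Prop :=
  exists s : seq V, [/\ 2 < size s, uniq s & cycle (adj F) s].

Definition is_rft : Prop :=
  [/\ symmetric (adj F) /\ irreflexive (adj F),
      (forall x y, adj F x y -> part F x = part F y),
      ~ has_cycle,
      (forall x, #|[set r in rroots F | connect (adj F) x r]| = 1)
    & 0 < eF ].

Definition suitable : Prop :=
  3 * aF + kF <= eF + 2 \/ (aF = 1 /\ 4 <= tF).

Definition leaves : {set V} :=
  [set x | (#|[set y | adj F x y]| == 1) && (x \notin rroots F)].

End Defs.
Arguments vset {V} F i.
Arguments e_i {V} F i.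

(* F (on V) is a valid subforest of G (on W), the inclusion being realised by
   an injective vertex map f (F_i ⊆ G_i, ell F <= ell G, rroots to rroots). *)
Definition valid_sub (V W : finType) (F : rft V) (G : rft W) (f : V -> W) : Prop :=
  [/\ injective f, ell F <= ell G,
      (forall x, nat_of_ord (part G (f x)) = nat_of_ord (part F x)),
      (forall x y, adj F x y -> adj G (f x) (f y))
    & (forall x, x \in rroots F -> f x \in rroots G)].

Definition m_suitable (m : nat) (V : finType) (F : rft V) : Prop :=
  exists (W : finType) (G : rft W) (f : V -> W),
    [/\ is_rft G, suitable G, eF G = m & valid_sub F G f].

(* A position is (Red, Blue), sets of edges (2-subsets of 'I_N).           *)
Definition position (N : nat) := ({set {set 'I_N}} * {set {set 'I_N}})%type.

Definition free_edge N (s : position N) (e : {set 'I_N}) : bool :=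
  [&& #|e| == 2, e \notin s.1 & e \notin s.2].

Fixpoint waiter_forces N (P : position N -> Prop) (k : nat) (s : position N) : Prop :=
  P s \/
  match k with
  | 0 => False
  | k'.+1 => exists e1 e2 : {set 'I_N},
      [/\ free_edge s e1, free_edge s e2, e1 != e2,
          waiter_forces P k' (e1 |: s.1, e2 |: s.2)
        & waiter_forces P k' (e2 |: s.1, e1 |: s.2)]
  end.

Definition good_copy (V : finType) (F : rft V) N (rho : V -> 'I_N)
    (s : position N) : Prop :=
  let Red := s.1 in let Blue := s.2 in
  exists phi : V -> 'I_N,
  [/\ injective phi /\
      (forall x y, adj F x y -> [set phi x; phi y] \in Red),
      (forall x, x \in rroots F -> phi x = rho x) /\
      (forall x y, x \in rroots F -> y \in rroots F -> x != y ->
                   [set phi x; phi y] \notin Red :|: Blue),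
      (forall i e, e \in Blue -> ~~ (e \subset phi @: vset F i)) /\
      (forall i e, e \in Red -> e \subset phi @: vset F i ->
                   exists x y, [/\ adj F x y, part F x = i & e = [set phi x; phi y]]),
      (forall e, e \in Red :|: Blue -> ~~ [disjoint e & phi @: [set: V]])
    & (forall w, w \notin phi @: [set: V] ->
                   #|[set e in Red :|: Blue | w \in e]| <= 1 /\
                   (forall e u, e \in Red :|: Blue -> w \in e -> u \in e -> u != w ->
                      u \notin phi @: leaves F))].

(* Orient every tree of F towards its root: each edge of F is {x, parent x} for a unique
   non-root x, so F can be built by embedding its non-roots one at a time, each after its
   parent.  Waiter always offers two edges from images of embedded parents to vertices of B
   outside the copy, and whichever edge Client colours red extends the copy.  Three offers are
   used: two fresh vertices (untouched by coloured edges) for the same vertex x, which costs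
   two fresh vertices; one fresh vertex for vertices of two different forests F_i and F_j,
   which costs one and leaves a blue edge between copies of different forests; and a
   two-round combination in which the blue endpoint of the first round is shared in the
   second, costing two fresh vertices for two rounds.  The choice is dictated by the numbers
   r_i of vertices of F_i still to be embedded: a balance condition between the r_i and the
   number of fresh vertices holds at the start by m-suitability (B has exactly m vertices
   besides the images of the roots) and is preserved by the right offer, so fresh vertices
   never run out.  Every blue edge either joins copies of different forests and not two roots,
   or hangs from the image of a parent, which is never a leaf; this yields (a)-(f). *)

From mathcomp Require Import all_boot zify.
Set Implicit Arguments. Unset Strict Implicit. Unset Printing Implicit Defensive.

Lemma waiter_offer N (P : position N -> Prop) k s e1 e2 :
  free_edge s e1 -> free_edge s e2 -> e1 != e2 ->
  waiter_forces P k (e1 |: s.1, e2 |: s.2) -> waiter_forces P k (e2 |: s.1, e1 |: s.2) ->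
  waiter_forces P k.+1 s.
Proof. by move=> *; right; exists e1, e2. Qed.

Lemma set2_inj_l (T : finType) (a b w : T) : [set a; w] = [set b; w] -> a = b.
Proof.
move=> Eab; have : a \in [set b; w] by rewrite -Eab !inE eqxx.
rewrite !inE => /orP[/eqP //|/eqP Ea]; subst a.
have : b \in [set w; w] by rewrite Eab !inE eqxx.
by rewrite !inE orbb => /eqP.
Qed.

Lemma set2_inj_r (T : finType) (a b w : T) : [set w; a] = [set w; b] -> a = b.
Proof. by rewrite [[set w; a]]setUC [[set w; b]]setUC => /set2_inj_l. Qed.

Section Balance.
Variable n : nat.
Implicit Types (r : 'I_n -> nat) (b : nat).

(* [b] counts the fresh vertices and [r i] the vertices of F_i still to be embedded. *)
Definition balanced b r :=
  [/\ 0 < \sum_i r i -> \sum_i r i < b,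
      forall p q, p != q -> 2 * r p + r q <= b
    & forall p, 2 * r p <= b].

Definition dec r i := fun x => r x - (x == i).

Lemma dec_id r i : dec r i i = (r i).-1.
Proof. by rewrite /dec eqxx subn1. Qed.

Lemma dec_neq r i x : x != i -> dec r i x = r x.
Proof. by rewrite /dec => /negbTE ->; rewrite subn0. Qed.

Lemma leq_dec r i x : dec r i x <= r x.
Proof. exact: leq_subr. Qed.

Lemma sum_dec r i : 0 < r i -> \sum_x dec r i x = (\sum_x r x).-1.
Proof.
move=> r_i; rewrite (bigD1 i) //= [in RHS](bigD1 i) //= dec_id.
by rewrite (eq_bigr r) => [|x /dec_neq]; first lia.
Qed.

Lemma leq_sum_uniq r (s : seq 'I_n) : uniq s -> \sum_(x <- s) r x <= \sum_x r x.
Proof.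
move=> s_uniq; apply: (uniq_sub_le_big (le := leq)) => //.
- by move=> x y; exact: leq_addr.
- exact: index_enum_uniq.
- by move=> x _; rewrite mem_index_enum.
Qed.

Lemma leq_sum1 r p : r p <= \sum_x r x.
Proof. by have := @leq_sum_uniq r [:: p]; rewrite big_seq1; apply. Qed.

Lemma leq_sum2 r p q : p != q -> r p + r q <= \sum_x r x.
Proof.
by move=> pq; have := @leq_sum_uniq r [:: p; q]; rewrite !big_cons big_nil /= inE pq addn0; apply.
Qed.

Lemma balanced_eq b r r' : r =1 r' -> balanced b r -> balanced b r'.
Proof.
move=> Er [bal_sum bal_pair bal_one]; have Es : \sum_i r i = \sum_i r' i by apply: eq_bigr.
by split; rewrite -?Es // => *; rewrite -!Er; auto.
Qed.

Lemma balanced_le b b' r : b <= b' -> balanced b r -> balanced b' r.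
Proof.
move=> le_b [bal_sum bal_pair bal_one].
by split=> [/bal_sum|p q /bal_pair|p]; last have := bal_one p; lia.
Qed.

Lemma balanced_gt1 b r p : balanced b r -> 0 < r p -> 1 < b.
Proof. by case=> _ _ /(_ p); lia. Qed.

Lemma balanced_single b r i : balanced b r -> 0 < r i -> (forall x, x != i -> r x = 0) ->
  balanced (b - 2) (dec r i).
Proof.
move=> [_ _ bal_one] r_i r0.
have sum_i : \sum_x r x = r i by rewrite (bigD1 i) //= big1 ?addn0.
have := bal_one i; split.
- by rewrite (sum_dec r_i) sum_i; lia.
- move=> p q pq; have [Ep|pi] := eqVneq p i.
    subst p; have qi : q != i by rewrite eq_sym.
    by rewrite dec_id (dec_neq _ qi) (r0 _ qi); lia.
  rewrite dec_neq // r0 //; have [->|qi] := eqVneq q i; first by rewrite dec_id; lia.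
  by rewrite dec_neq // r0 //; lia.
- move=> p; have [->|pi] := eqVneq p i; first by rewrite dec_id; lia.
  by rewrite dec_neq // r0 //; lia.
Qed.

Lemma balanced_pair b r c d : balanced b r -> c != d -> 0 < r c ->
  (forall x, r x <= r c) \/ (forall x, x != c -> x != d -> r x < r c) ->
  balanced (b - 1) (dec r c).
Proof.
move=> [bal_sum bal_pair bal_one] cd r_c c_max.
have le_c x : x != c -> x != d -> r x <= r c.
  by case: c_max => [H|H] *; [exact: H | exact/ltnW/H].
have lt_c x : x != c -> x != d -> r x < r c \/ r d <= r c.
  by case: c_max => [H|H] *; [right; exact: H | left; exact: H].
have sum_cd := leq_sum2 r cd.
have lt_b : \sum_x r x < b by apply: bal_sum; lia.
split.
- by rewrite sum_dec //; lia.
- move=> p q pq; have [Ep|pc] := eqVneq p c.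
    by subst p; rewrite dec_id dec_neq 1?eq_sym //; have := bal_pair _ _ pq; lia.
  rewrite (dec_neq _ pc); have [Eq|qc] := eqVneq q c.
    by subst q; rewrite dec_id; have := bal_pair _ _ pq; lia.
  rewrite (dec_neq _ qc); have [Ep|pd] := eqVneq p d.
    subst p; have cdq : uniq [:: c; d; q] by rewrite /= !inE !negb_or cd [c == q]eq_sym qc pq.
    have := @leq_sum_uniq r _ cdq; rewrite !big_cons big_nil.
    have := bal_pair _ _ qc; have := bal_pair d c; rewrite eq_sym cd => /(_ isT).
    by case: (lt_c q qc); [rewrite eq_sym | | ]; lia.
  have [Eq|qd] := eqVneq q d.
    subst q; have cdp : uniq [:: c; d; p].
      by rewrite /= !inE !negb_or cd [c == p]eq_sym [d == p]eq_sym pc pq.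
    by have := @leq_sum_uniq r _ cdp; rewrite !big_cons big_nil; have := le_c p pc pd; lia.
  have cdpq : uniq [:: c; d; p; q].
    by rewrite /= !inE !negb_or cd [c == p]eq_sym [c == q]eq_sym [d == p]eq_sym
      [d == q]eq_sym pc qc pd qd pq.
  by have := @leq_sum_uniq r _ cdpq; rewrite !big_cons big_nil; have := le_c p pc pd; lia.
- move=> p; have [->|pc] := eqVneq p c; first by rewrite dec_id; have := bal_one c; lia.
  by rewrite dec_neq //; have := bal_pair _ _ pc; lia.
Qed.

Lemma balanced_chain b r i c : balanced b r -> c != i -> 0 < r c ->
  (forall x, x != i -> r x < r i) -> balanced (b - 2) (dec (dec r i) c).
Proof.
move=> [bal_sum bal_pair bal_one] ci r_c i_max.
have r_ci := i_max _ ci.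
have lt_b : \sum_x r x < b by apply: bal_sum; have := leq_sum2 r ci; lia.
split.
- by rewrite !sum_dec ?dec_neq //; lia.
- move=> p q pq; have le_q := leq_trans (leq_dec _ c q) (leq_dec r i q).
  have [Ep|pi] := eqVneq p i.
    by subst p; rewrite dec_neq 1?eq_sym // dec_id; have := bal_pair _ _ pq; lia.
  have := leq_dec (dec r i) c p; rewrite (dec_neq _ pi); have := i_max _ pi.
  have [Eq|qi] := eqVneq q i.
    subst q; rewrite [dec _ c i]dec_neq 1?eq_sym // dec_id.
    by have := bal_pair i p; rewrite eq_sym => /(_ pi); lia.
  by have := bal_pair i q; rewrite eq_sym => /(_ qi); lia.
- move=> p; have := leq_dec (dec r i) c p; have [->|pi] := eqVneq p i.
    by rewrite dec_id; have := bal_one i; lia.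
  by rewrite (dec_neq _ pi); have := i_max _ pi; have := bal_pair _ _ (pi : p != i); lia.
Qed.

Lemma balanced_move b r : balanced b r -> 0 < \sum_x r x ->
  [\/ exists i, 0 < r i /\ balanced (b - 2) (dec r i),
      exists i j, [/\ i != j, 0 < r i, 0 < r j,
                     balanced (b - 1) (dec r i) & balanced (b - 1) (dec r j)]
    | exists i j c, [/\ uniq [:: i; j; c], [&& 0 < r i, 0 < r j & 0 < r c],
                     balanced (b - 2) (dec (dec r i) j) & balanced (b - 2) (dec (dec r i) c)]].
Proof.
move=> bal sum_gt0.
have [i0 r_i0] : exists i0, 0 < r i0.
  case: (pickP (fun i => 0 < r i)) => [i0|r0]; first by exists i0.
  by move: sum_gt0; rewrite big1 // => i _; apply/eqP; rewrite -leqn0 leqNgt r0.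
have [i _ i_max] := @arg_maxnP _ i0 xpredT r isT.
have r_i : 0 < r i := leq_trans r_i0 (i_max _ isT).
case: (pickP (fun j => (j != i) && (r j == r i))) => [j /andP[ji /eqP Eji]|no_tie].
  have ij : i != j by rewrite eq_sym.
  have r_j : 0 < r j by rewrite Eji.
  apply: Or32; exists i, j; split=> //.
    by apply: (balanced_pair bal ij r_i); left=> x; apply: i_max.
  by apply: (balanced_pair bal ji r_j); left=> x; rewrite Eji; apply: i_max.
have i_strict x : x != i -> r x < r i.
  move=> xi; have := no_tie x; rewrite xi /= => /negbT r_neq.
  by rewrite ltn_neqAle r_neq; apply: i_max.
case: (pickP (fun j => (j != i) && (0 < r j))) => [j /andP[ji r_j]|only_i]; last first.
  apply: Or31; exists i; split=> //; apply: balanced_single => // x xi.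
  by apply/eqP; rewrite -leqn0 leqNgt; have := only_i x; rewrite xi /= => ->.
have ij : i != j by rewrite eq_sym.
case: (pickP (fun c => [&& c != i, c != j & 0 < r c])) => [c /and3P[ci cj r_c]|only_ij].
  apply: Or33; exists i, j, c; split; rewrite ?r_i ?r_j ?r_c //; try exact: balanced_chain.
  by rewrite /= !inE !negb_or ij [i == c]eq_sym [j == c]eq_sym ci cj.
have r0 x : x != i -> x != j -> r x = 0.
  by move=> xi xj; apply/eqP; rewrite -leqn0 leqNgt; have := only_ij x; rewrite xi xj /= => ->.
apply: Or32; exists i, j; split=> //.
  by apply: (balanced_pair bal ij r_i); right=> x xi _; apply: i_strict.
by apply: (balanced_pair bal ji r_j); right=> x xj xi; rewrite (r0 x xi xj).
Qed.
End Balance.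

Section Forest.
Variables (V : finType) (F : rft V).
Hypothesis adj_sym : symmetric (adj F).
Hypothesis adj_irr : irreflexive (adj F).
Hypothesis acyclic : ~ has_cycle F.
Hypothesis one_root : forall x, #|[set r in rroots F | connect (adj F) x r]| = 1.
Hypothesis adj_part : forall x y, adj F x y -> part F x = part F y.

Local Notation A := (adj F).
Local Notation R := (rroots F).

Lemma connect_root x : exists2 r, r \in R & connect A x r.
Proof.
have : 0 < #|[set r in R | connect A x r]| by rewrite one_root.
by case/card_gt0P => r; rewrite inE => /andP[]; exists r.
Qed.

Lemma connect_root_uniq x r1 r2 :
  r1 \in R -> r2 \in R -> connect A x r1 -> connect A x r2 -> r1 = r2.
Proof.
move=> R1 R2 x_r1 x_r2; have /eqP/cards1P[r Er] := one_root x.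
have : r1 \in [set r in R | connect A x r] by rewrite inE R1 x_r1.
have : r2 \in [set r in R | connect A x r] by rewrite inE R2 x_r2.
by rewrite Er !inE => /eqP-> /eqP->.
Qed.

Definition reaches_root n x := [exists p : n.-tuple V, path A x p && (last x p \in R)].

Lemma reaches_root_ex x : exists n, reaches_root n x.
Proof.
have [r Rr /connectP[p x_p Er]] := connect_root x.
by exists (size p); apply/existsP; exists (in_tuple p); rewrite x_p -Er Rr.
Qed.

Definition depth x := ex_minn (reaches_root_ex x).

Lemma reaches_root_depth x : reaches_root (depth x) x.
Proof. by rewrite /depth; case: ex_minnP. Qed.

Lemma depth_min x n : reaches_root n x -> depth x <= n.
Proof. by rewrite /depth; case: ex_minnP => k _ k_min /k_min. Qed.

Lemma depth_eq0 x : (depth x == 0) = (x \in R).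
Proof.
apply/idP/idP => [/eqP d0|Rx].
  by have := reaches_root_depth x; rewrite d0 => /existsP[p /andP[_]]; rewrite tuple0.
by rewrite -leqn0; apply: depth_min; apply/existsP; exists [tuple]; rewrite /= Rx.
Qed.

Lemma depth_adj x y : A x y -> depth x <= (depth y).+1.
Proof.
move=> xy; apply: depth_min; have /existsP[p /andP[y_p last_p]] := reaches_root_depth y.
by apply/existsP; exists [tuple of y :: p]; rewrite /= xy y_p.
Qed.

Lemma depth_step x : x \notin R -> exists2 y, A x y & depth y = (depth x).-1.
Proof.
move=> xNR; have : depth x != 0 by rewrite depth_eq0.
have /existsP[p /andP[]] := reaches_root_depth x.
case: p => [[|y p] /= /eqP size_p]; first by rewrite (negbTE xNR).
case/andP=> xy y_p last_p d_gt0; exists y => //.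
suff : depth y <= (depth x).-1 by have := depth_adj xy; lia.
apply: depth_min; apply/existsP.
have size_p' : size p == (depth x).-1 by rewrite -size_p.
by exists (Tuple size_p'); rewrite /= y_p.
Qed.

(* Junk value [parent x = x] at the roots. *)
Definition parent x := odflt x [pick y | A x y && (depth y == (depth x).-1)].

Lemma parentP x : x \notin R -> A x (parent x) /\ depth (parent x) = (depth x).-1.
Proof.
move=> xNR; rewrite /parent; case: pickP => [y /andP[xy /eqP] //|no_y].
by have [y xy dy] := depth_step xNR; have := no_y y; rewrite xy dy eqxx.
Qed.

Lemma adj_parent x : x \notin R -> A x (parent x).
Proof. by case/parentP. Qed.

Lemma depth_parent x : x \notin R -> depth (parent x) < depth x.
Proof.
move=> xNR; have [_ ->] := parentP xNR.
have : depth x != 0 by rewrite depth_eq0.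
lia.
Qed.

Lemma part_parent x : x \notin R -> part F (parent x) = part F x.
Proof. by move/adj_parent/adj_part. Qed.

Lemma parent_connect_root (A' : rel V) :
  (forall u, u \notin R -> A' u (parent u)) -> forall u, exists2 r, r \in R & connect A' u r.
Proof.
move=> A'_parent u; elim: {u}(depth u) {-2}u (leqnn (depth u)) => [|d IH] u d_u.
  by exists u; rewrite ?connect0 // -depth_eq0 -leqn0.
have [Ru|uNR] := boolP (u \in R); first by exists u; rewrite ?connect0.
have [|r Rr pu_r] := IH (parent u); first by have := depth_parent uNR; lia.
by exists r; rewrite // (connect_trans (connect1 (A'_parent _ uNR))).
Qed.

Lemma cycle_of_detour (A' : rel V) x y : subrel A' A -> A x y -> ~~ A' x y ->
  connect A' x y -> has_cycle F.
Proof.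
move=> A'_sub xy xNy /connectP[p x_p y_last].
case: (shortenP x_p) y_last => [[|z [|z' q]] x_q q_uniq _] /= y_last.
- by move: xy; rewrite -y_last adj_irr.
- by move: x_q xNy; rewrite /= -y_last => /andP[->].
exists [:: x, z, z' & q]; split=> //.
by rewrite /cycle rcons_path (sub_path A'_sub x_q) /= -y_last adj_sym.
Qed.

Lemma adj_parentE x y : A x y ->
  ((x \notin R) && (parent x == y)) || ((y \notin R) && (parent y == x)).
Proof.
(* Otherwise the edge xy can be dropped without disconnecting x from y, closing a cycle. *)
move=> xy; apply/negPn/negP; rewrite negb_or => /andP[not_xy not_yx].
pose A' : rel V := [rel u v | A u v && ~~ [|| (u == x) && (v == y) | (u == y) && (v == x)]].
have A'_parent u : u \notin R -> A' u (parent u).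
  move=> uNR; rewrite /A' /= adj_parent //=; apply/negP => /orP[]/andP[/eqP Eu /eqP Ev].
    by move: not_xy; rewrite -Eu uNR Ev eqxx.
  by move: not_yx; rewrite -Eu uNR Ev eqxx.
have A'_sub : subrel A' A by move=> u v /andP[].
have A'_sym : symmetric A'.
  move=> u v; rewrite /A' /= adj_sym; congr (_ && ~~ _).
  by case: (u == x); case: (v == y); case: (u == y); case: (v == x).
have A'_connect : subrel (connect A') (connect A) by apply: connect_sub => u v /A'_sub/connect1.
have [rx Rrx x_rx] := parent_connect_root A'_parent x.
have [ry Rry y_ry] := parent_connect_root A'_parent y.
have Erxy : rx = ry.
  apply: (connect_root_uniq Rrx Rry (A'_connect _ _ x_rx)).
  exact: connect_trans (connect1 xy) (A'_connect _ _ y_ry).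
apply: acyclic; apply: (cycle_of_detour A'_sub xy); first by rewrite /A' /= !eqxx andbF.
by rewrite (connect_trans x_rx) // Erxy (sym_connect_sym A'_sym).
Qed.

Lemma parent_edge_inj : {in [set x | x \notin R] &, injective (fun x => [set x; parent x])}.
Proof.
move=> x y; rewrite !inE => xNR yNR /= Exy.
have : x \in [set y; parent y] by rewrite -Exy !inE eqxx.
have : y \in [set x; parent x] by rewrite Exy !inE eqxx.
rewrite !inE => /orP[/eqP -> //|/eqP Ey] /orP[/eqP //|/eqP Ex].
by have := depth_parent xNR; have := depth_parent yNR; rewrite -Ex -Ey; lia.
Qed.

Lemma edges_parent : edges F = [set [set x; parent x] | x in [set x | x \notin R]].
Proof.
apply/setP => e; rewrite inE; apply/existsP/imsetP => [[x /existsP[y /andP[xy /eqP ->]]]|].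
  case/orP: (adj_parentE xy) => /andP[NR /eqP <-]; first by exists x; rewrite ?inE.
  by exists y; rewrite ?inE // setUC.
case=> x; rewrite inE => xNR ->; exists x; apply/existsP; exists (parent x).
by rewrite adj_parent // eqxx.
Qed.

Lemma eF_non_roots : eF F = #|~: R|.
Proof.
rewrite /eF edges_parent card_in_imset; last exact: parent_edge_inj.
by apply: eq_card => x; rewrite !inE.
Qed.

Lemma e_i_non_roots i : e_i F i = #|[set x | (x \notin R) && (part F x == i)]|.
Proof.
have inj : {in [set x | (x \notin R) && (part F x == i)] &,
              injective (fun x => [set x; parent x])}.
  by move=> x y; rewrite !inE => /andP[xNR _] /andP[yNR _]; apply: parent_edge_inj; rewrite inE.
rewrite /e_i -(card_in_imset inj); apply: eq_card => e.
rewrite inE edges_parent; apply/andP/imsetP.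
  case=> /imsetP[x]; rewrite inE => xNR -> /subsetP/(_ x); rewrite !inE eqxx => /(_ isT) xi.
  by exists x; rewrite // inE xNR.
case=> x; rewrite inE => /andP[xNR xi] ->; split; first by apply: imset_f; rewrite inE.
by apply/subsetP => z; rewrite !inE => /orP[]/eqP->; rewrite ?part_parent.
Qed.

Lemma parent_notin_leaves x : x \notin R -> parent x \notin leaves F.
Proof.
move=> xNR; rewrite inE negb_and negbK; have [|pNR] := boolP (parent x \in R).
  by rewrite orbT.
rewrite orbF; have nbrs : [set parent (parent x); x] \subset [set y | A (parent x) y].
  by apply/subsetP => z; rewrite !inE => /orP[]/eqP->; rewrite ?adj_parent // adj_sym adj_parent.
have ppx : parent (parent x) != x.
  by apply/eqP => E; have := depth_parent xNR; have := depth_parent pNR; rewrite E; lia.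
by apply/eqP => deg1; have := subset_leq_card nbrs; rewrite cards2 ppx deg1.
Qed.

Section Game.
Variables (N : nat) (rho : V -> 'I_N).
Implicit Types (E : {set V}) (phi : V -> 'I_N) (s : position N) (e : {set 'I_N}).

Definition extend phi x u := fun y => if y == x then u else phi y.

Definition parent_edges E phi := [set [set phi x; phi (parent x)] | x in E :\: R].

(* The two shapes of blue edges: cross edges give (b) and (c), and pendant edges hang from the
   image of a parent, which is never a leaf, as (f) requires. *)
Definition cross_edge E phi e :=
  exists u v, [/\ u \in E, v \in E, part F u != part F v,
                 (u \notin R) || (v \notin R) & e = [set phi u; phi v]].

Definition pendant_edge E phi e :=
  exists c w, [/\ c \in E, c \notin R, w \notin phi @: E & e = [set phi (parent c); w]].

Record copy_inv E phi s : Prop := {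
  inv_roots : R \subset E;
  inv_parent : forall x, x \in E -> x \notin R -> parent x \in E;
  inv_inj : {in E &, injective phi};
  inv_rho : {in R, phi =1 rho};
  inv_red : s.1 = parent_edges E phi;
  inv_blue : forall e, e \in s.2 -> cross_edge E phi e \/ pendant_edge E phi e;
  inv_blue_deg : forall w, w \notin phi @: E -> #|[set e in s.2 | w \in e]| <= 1
}.

Definition fresh E phi s :=
  [set v | (v \notin phi @: E) && (v \notin cover (s.1 :|: s.2))].

Definition profile E i := #|[set x | (x \notin E) && (part F x == i)]|.

Lemma extend_id phi x u : extend phi x u x = u.
Proof. by rewrite /extend eqxx. Qed.

Lemma extend_other phi x u y : y != x -> extend phi x u y = phi y.
Proof. by rewrite /extend => /negbTE ->. Qed.

Lemma imset_extend E phi x u : x \notin E -> extend phi x u @: (x |: E) = u |: phi @: E.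
Proof.
move=> xNE; rewrite imsetU1 extend_id; congr (_ |: _).
by apply: eq_in_imset => y yE; apply: extend_other; apply: (memPn xNE).
Qed.

Lemma image_neq E phi p u : p \in E -> u \notin phi @: E -> phi p != u.
Proof. by move=> pE; apply: contraNneq => <-; apply: imset_f. Qed.

Lemma parent_edges_extend E phi x u :
  (forall y, y \in E -> y \notin R -> parent y \in E) -> x \notin E -> x \notin R ->
  parent x \in E ->
  parent_edges (x |: E) (extend phi x u) = [set phi (parent x); u] |: parent_edges E phi.
Proof.
move=> E_parent xNE xNR pxE; rewrite /parent_edges.
have -> : (x |: E) :\: R = x |: (E :\: R).
  by apply/setP => y; rewrite !inE; case: eqVneq => // ->; rewrite xNR.
rewrite imsetU1 extend_id extend_other ?(memPn xNE) //; congr (_ |: _).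
  by rewrite setUC.
apply: eq_in_imset => y; rewrite inE => /andP[yNR yE].
by rewrite !extend_other // (memPn xNE) // E_parent.
Qed.

Lemma classify_extend E phi x u (e : {set 'I_N}) :
  (forall y, y \in E -> y \notin R -> parent y \in E) ->
  x \notin E -> x \notin R -> u \notin phi @: E ->
  (u \in e -> exists2 z, z \in E & part F z != part F x /\ e = [set phi z; u]) ->
  cross_edge E phi e \/ pendant_edge E phi e ->
  cross_edge (x |: E) (extend phi x u) e \/ pendant_edge (x |: E) (extend phi x u) e.
Proof.
move=> E_parent xNE xNR uN u_e [[a [b [aE bE ab abNR ->]]]|[c [w [cE cNR wN Ee]]]].
  left; exists a, b; rewrite !in_setU1 aE bE !orbT !extend_other ?(memPn xNE) //.
have [Ewu|wu] := eqVneq w u.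
  subst w e; have [z zE [zx ->]] := u_e (setU1r _ (set11 _)).
  left; exists z, x; rewrite !in_setU1 zE eqxx xNR orbT extend_id.
  by rewrite extend_other ?(memPn xNE) ?orbT.
right; exists c, w; rewrite Ee in_setU1 cE orbT imset_extend // in_setU1 negb_or wu wN.
by rewrite extend_other ?(memPn xNE) ?E_parent.
Qed.

Lemma copy_inv_extend E phi s x u bl :
  copy_inv E phi s -> x \notin E -> parent x \in E -> u \notin phi @: E ->
  (forall e, e \in s.2 -> u \in e ->
     exists2 z, z \in E & part F z != part F x /\ e = [set phi z; u]) ->
  cross_edge (x |: E) (extend phi x u) bl \/ pendant_edge (x |: E) (extend phi x u) bl ->
  (forall w, w \notin extend phi x u @: (x |: E) -> w \in bl ->
     forall e, e \in s.2 -> w \notin e) ->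
  copy_inv (x |: E) (extend phi x u) ([set phi (parent x); u] |: s.1, bl |: s.2).
Proof.
move=> [E_R E_parent phi_inj phi_rho red blue deg] xNE pxE uN u_blue bl_blue bl_new.
have xNR : x \notin R by apply: contra xNE => /(subsetP E_R).
have phi'E : {in E, extend phi x u =1 phi} by move=> y /(memPn xNE)/extend_other.
split=> /=.
- exact: subset_trans E_R (subsetU1 _ _).
- move=> y; rewrite !in_setU1 => /orP[/eqP->|yE] yNR; first by rewrite pxE orbT.
  by rewrite E_parent ?orbT.
- move=> y z; rewrite !in_setU1 => /orP[/eqP->|yE] /orP[/eqP->|zE] //;
    rewrite ?extend_id ?phi'E // => Eu.
  + by move: uN; rewrite Eu imset_f.
  + by move: uN; rewrite -Eu imset_f.
  + exact: phi_inj.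
- by move=> y yR; rewrite phi'E ?phi_rho //; apply: (subsetP E_R).
- by rewrite red parent_edges_extend.
- move=> e; rewrite in_setU1 => /orP[/eqP-> //|e_blue].
  by apply: classify_extend => //; [exact: u_blue | exact: blue].
- move=> w; rewrite imset_extend // in_setU1 negb_or => /andP[wu wN].
  have [w_bl|wNbl] := boolP (w \in bl).
    have w_old e : e \in s.2 -> w \notin e.
      by apply: (bl_new w _ w_bl); rewrite imset_extend // in_setU1 negb_or wu.
    suff -> : [set e in bl |: s.2 | w \in e] = [set bl] by rewrite cards1.
    apply/setP => e; rewrite !inE; case: eqVneq => [->|_] //=.
    by apply/andP => -[/w_old/negP].
  suff -> : [set e in bl |: s.2 | w \in e] = [set e in s.2 | w \in e] by apply: deg.
  by apply/setP => e; rewrite !inE; case: eqVneq => [->|_] //=; rewrite (negbTE wNbl) andbF.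
Qed.

Lemma fresh_notin_image E phi s v : v \in fresh E phi s -> v \notin phi @: E.
Proof. by rewrite inE => /andP[]. Qed.

Lemma fresh_notin_blue E phi s v e : v \in fresh E phi s -> e \in s.2 -> v \notin e.
Proof.
rewrite inE => /andP[_ vNcov] e_blue; apply: contra vNcov => v_e.
by apply/bigcupP; exists e; rewrite // inE e_blue orbT.
Qed.

Lemma fresh_extend E phi s x u bl : x \notin E -> parent x \in E ->
  fresh E phi s :\: (u |: bl) \subset
  fresh (x |: E) (extend phi x u) ([set phi (parent x); u] |: s.1, bl |: s.2).
Proof.
move=> xNE pxE; apply/subsetP => v; rewrite !inE negb_or.
case/andP=> /andP[vu vNbl] /andP[vN vNcov]; rewrite imset_extend // in_setU1 negb_or vu vN /=.
apply/bigcupP => -[e]; rewrite !inE -!orbA => /or4P[/eqP->|e_red|/eqP->|e_blue].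
- by rewrite !inE (negbTE vu) orbF => /eqP Ev; move: vN; rewrite Ev imset_f.
- by move=> v_e; move/bigcupP: vNcov; apply; exists e; rewrite // inE e_red.
- by rewrite (negbTE vNbl).
- by move=> v_e; move/bigcupP: vNcov; apply; exists e; rewrite // inE e_blue orbT.
Qed.

Lemma card_fresh_extend E phi s x u bl (X : {set 'I_N}) :
  x \notin E -> parent x \in E -> fresh E phi s :&: (u |: bl) \subset X ->
  #|fresh E phi s| - #|X| <=
  #|fresh (x |: E) (extend phi x u) ([set phi (parent x); u] |: s.1, bl |: s.2)|.
Proof.
move=> xNE pxE sub_X.
have lost : #|fresh E phi s :&: (u |: bl)| <= #|X| by apply: subset_leq_card.
have kept : #|fresh E phi s :\: (u |: bl)| <=
    #|fresh (x |: E) (extend phi x u) ([set phi (parent x); u] |: s.1, bl |: s.2)|.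
  by apply/subset_leq_card/fresh_extend.
by have := cardsID (u |: bl) (fresh E phi s); lia.
Qed.

Lemma free_edge_to_new E phi s p u : copy_inv E phi s -> p \in E -> u \notin phi @: E ->
  [set phi p; u] \notin s.2 -> free_edge s [set phi p; u].
Proof.
move=> inv pE uN pu_blue; rewrite /free_edge pu_blue andbT cards2 (image_neq pE uN) /=.
rewrite (inv_red inv); apply/imsetP => -[y]; rewrite inE => /andP[yNR yE] Ee.
have : u \in [set phi y; phi (parent y)] by rewrite -Ee !inE eqxx orbT.
by rewrite !inE => /orP[]/eqP Eu; move: uN; rewrite Eu imset_f // (inv_parent inv).
Qed.

Lemma blue_edge_uniq E phi s w e1 e2 : copy_inv E phi s -> w \notin phi @: E ->
  e1 \in s.2 -> w \in e1 -> e2 \in s.2 -> w \in e2 -> e1 = e2.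
Proof.
move=> inv wN ? ? ? ?; have /card_le1_eqP := inv_blue_deg inv wN; apply; exact/setIdP.
Qed.

Lemma notin_inv_roots E phi s x : copy_inv E phi s -> x \notin E -> x \notin R.
Proof. by move=> inv; apply: contra => /(subsetP (inv_roots inv)). Qed.

Lemma offer_fresh_pair E phi s x u1 u2 :
  copy_inv E phi s -> x \notin E -> parent x \in E ->
  u1 \in fresh E phi s -> u2 \in fresh E phi s -> u1 != u2 ->
  let s' := ([set phi (parent x); u1] |: s.1, [set phi (parent x); u2] |: s.2) in
  copy_inv (x |: E) (extend phi x u1) s' /\
  #|fresh E phi s| - 2 <= #|fresh (x |: E) (extend phi x u1) s'|.
Proof.
move=> inv xNE pxE u1F u2F u12 s'; have u1N := fresh_notin_image u1F.
have u2N' : u2 \notin extend phi x u1 @: (x |: E).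
  by rewrite imset_extend // in_setU1 negb_or eq_sym u12 (fresh_notin_image u2F).
split.
  apply: copy_inv_extend => //.
  - by move=> e e_blue; rewrite (negbTE (fresh_notin_blue u1F e_blue)).
  - right; exists x, u2; rewrite setU11 (notin_inv_roots inv xNE).
    by rewrite extend_other ?(memPn xNE).
  - move=> w wN; rewrite !inE => /orP[]/eqP Ew.
      by move: wN; rewrite Ew imset_extend // in_setU1 imset_f ?orbT.
    by rewrite Ew => e; apply: fresh_notin_blue u2F.
have := @card_fresh_extend E phi s x u1 [set phi (parent x); u2] [set u1; u2] xNE pxE.
rewrite cards2 u12; apply; apply/subsetP => v /setIP[vF].
rewrite !inE => /or3P[->|/eqP Ev|->]; rewrite ?orbT //.
by move/fresh_notin_image: vF; rewrite Ev imset_f.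
Qed.

Lemma offer_fresh_shared E phi s x y u :
  copy_inv E phi s -> x \notin E -> parent x \in E -> y \notin E -> parent y \in E ->
  part F x != part F y -> u \in fresh E phi s ->
  let s' := ([set phi (parent x); u] |: s.1, [set phi (parent y); u] |: s.2) in
  copy_inv (x |: E) (extend phi x u) s' /\
  #|fresh E phi s| - 1 <= #|fresh (x |: E) (extend phi x u) s'|.
Proof.
move=> inv xNE pxE yNE pyE xy uF s'; have uN := fresh_notin_image uF.
split.
  apply: copy_inv_extend => //.
  - by move=> e e_blue; rewrite (negbTE (fresh_notin_blue uF e_blue)).
  - left; exists (parent y), x; rewrite setU11 in_setU1 pyE orbT (notin_inv_roots inv xNE).
    rewrite part_parent ?(notin_inv_roots inv yNE) // eq_sym xy orbT extend_id.
    by rewrite extend_other ?(memPn xNE).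
  - move=> w; rewrite imset_extend // in_setU1 negb_or => /andP[wu wN].
    by rewrite !inE (negbTE wu) orbF => /eqP Ew; move: wN; rewrite Ew imset_f.
have := @card_fresh_extend E phi s x u [set phi (parent y); u] [set u] xNE pxE.
rewrite cards1; apply; apply/subsetP => v /setIP[vF].
rewrite !inE => /or3P[->|/eqP Ev|->] //.
by move/fresh_notin_image: vF; rewrite Ev imset_f.
Qed.

Lemma offer_pendant_shared E phi s y z w z0 :
  copy_inv E phi s -> y \notin E -> parent y \in E -> z \notin E -> parent z \in E ->
  part F y != part F z -> w \notin phi @: E ->
  z0 \in E -> [set phi z0; w] \in s.2 -> part F z0 != part F y ->
  let s' := ([set phi (parent y); w] |: s.1, [set phi (parent z); w] |: s.2) in
  copy_inv (y |: E) (extend phi y w) s' /\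
  #|fresh E phi s| <= #|fresh (y |: E) (extend phi y w) s'|.
Proof.
move=> inv yNE pyE zNE pzE yz wN z0E z0w_blue z0y s'.
have w_z0w : w \in [set phi z0; w] by rewrite !inE eqxx orbT.
split.
  apply: copy_inv_extend => //.
  - by move=> e e_blue w_e; exists z0; rewrite // (blue_edge_uniq inv wN e_blue w_e z0w_blue).
  - left; exists (parent z), y; rewrite setU11 in_setU1 pzE orbT (notin_inv_roots inv yNE).
    rewrite part_parent ?(notin_inv_roots inv zNE) // eq_sym yz orbT extend_id.
    by rewrite extend_other ?(memPn yNE).
  - move=> w'; rewrite imset_extend // in_setU1 negb_or => /andP[w'w w'N].
    by rewrite !inE (negbTE w'w) orbF => /eqP Ew; move: w'N; rewrite Ew imset_f.
have := @card_fresh_extend E phi s y w [set phi (parent z); w] set0 yNE pyE.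
rewrite cards0 subn0; apply; apply/subsetP => v /setIP[vF].
have wNF : w \notin fresh E phi s.
  by apply: contraL w_z0w => wF; apply: fresh_notin_blue wF z0w_blue.
rewrite !inE => /or3P[/eqP Ev|/eqP Ev|/eqP Ev]; move: vF; rewrite Ev ?(negbTE wNF) //.
by move/fresh_notin_image; rewrite imset_f.
Qed.

Lemma exists_frontier E : R \subset E -> (forall x, x \in E -> x \notin R -> parent x \in E) ->
  forall x, x \notin E -> exists y, [/\ y \notin E, part F y = part F x & parent y \in E].
Proof.
move=> E_R E_parent x; elim: {x}(depth x) {-2}x (leqnn (depth x)) => [|d IH] x d_x xNE.
  by move: xNE; rewrite (subsetP E_R) // -depth_eq0 -leqn0.
have xNR : x \notin R by apply: contra xNE => /(subsetP E_R).
have [pxE|pxNE] := boolP (parent x \in E); first by exists x.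
have [|y [yNE Ey pyE]] := IH (parent x) _ pxNE; first by have := depth_parent xNR; lia.
by exists y; rewrite Ey part_parent.
Qed.

Lemma frontier_in_part E phi s i : copy_inv E phi s -> 0 < profile E i ->
  exists x, [/\ x \notin E, part F x = i & parent x \in E].
Proof.
move=> inv /card_gt0P[x0]; rewrite inE => /andP[x0NE /eqP <-].
exact: exists_frontier (inv_roots inv) (inv_parent inv) x0 x0NE.
Qed.

Lemma sum_profile E : \sum_i profile E i = #|~: E|.
Proof.
rewrite -sum1_card (partition_big (part F) predT) //=.
by apply: eq_bigr => i _; rewrite /profile -sum1_card; apply: eq_bigl => x; rewrite !inE.
Qed.

Lemma profile_extend E x : x \notin E -> profile (x |: E) =1 dec (profile E) (part F x).
Proof.
move=> xNE i; rewrite /profile /dec; set S := [set y | (y \notin E) && (part F y == i)].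
have -> : [set y | (y \notin x |: E) && (part F y == i)] = S :\ x.
  by apply/setP => y; rewrite !inE negb_or; case: eqVneq => // ->; rewrite xNE.
have := cardsD1 x S; rewrite inE xNE /= => ->.
by rewrite [i == _]eq_sym; case: (part F x == i); lia.
Qed.

Lemma balanced_extend E x b b' : x \notin E -> balanced b (dec (profile E) (part F x)) ->
  b <= b' -> balanced b' (profile (x |: E)).
Proof.
move=> xNE bal le_b; apply: balanced_le le_b _; apply: balanced_eq bal => i.
by rewrite profile_extend.
Qed.

Lemma cardsC_U1 E x : x \notin E -> #|~: (x |: E)| = (#|~: E|).-1.
Proof.
move=> xNE; rewrite (cardsD1 x (~: E)) inE xNE add1n /=.
by apply: eq_card => y; rewrite !inE negb_or andbC.
Qed.

Section CompleteCopy.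
Variables (phi : V -> 'I_N) (s : position N).
Hypothesis inv : copy_inv [set: V] phi s.

Lemma full_inj : injective phi.
Proof. by move=> x y; apply: (inv_inj inv); rewrite inE. Qed.

Lemma mem_full_image (D : {set V}) x : (phi x \in phi @: D) = (x \in D).
Proof. exact/mem_imset/full_inj. Qed.

Lemma full_image_neq w z : w \notin phi @: [set: V] -> (w == phi z) = false.
Proof. by move=> wN; apply: contraNF wN => /eqP->; rewrite imset_f ?inE. Qed.

Lemma full_red e : e \in s.1 -> exists2 c, c \notin R & e = [set phi c; phi (parent c)].
Proof. by rewrite (inv_red inv) => /imsetP[c]; rewrite !inE => /andP[cNR _] ->; exists c. Qed.

Lemma full_adj_red x y : adj F x y -> [set phi x; phi y] \in s.1.
Proof.
move=> xy; rewrite (inv_red inv); case/orP: (adj_parentE xy) => /andP[NR /eqP <-].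
  by apply/imsetP; exists x; rewrite ?inE ?NR.
by apply/imsetP; exists y; rewrite ?inE ?NR // setUC.
Qed.

Lemma full_roots_uncolored x y : x \in R -> y \in R -> x != y ->
  [set phi x; phi y] \notin s.1 :|: s.2.
Proof.
move=> xR yR xy; have mem2 z : (phi z \in [set phi x; phi y]) = (z == x) || (z == y).
  by rewrite !inE !(inj_eq full_inj).
rewrite inE negb_or; apply/andP; split.
  apply/negP => /full_red[c cNR /setP/(_ (phi c))].
  by rewrite mem2 !inE eqxx => /orP[]/eqP Ec; move: cNR; rewrite Ec ?xR ?yR.
apply/negP => /(inv_blue inv)[[u [v [_ _ _ uvNR /setP Ee]]]|[c [w [_ _ wN /setP Ee]]]].
  have := Ee (phi u); have := Ee (phi v); rewrite !mem2 !inE !eqxx orbT.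
  by move=> /orP[]/eqP Ev /orP[]/eqP Eu; move: uvNR; rewrite Eu Ev ?xR ?yR.
by have := Ee w; rewrite !inE !(full_image_neq _ wN) eqxx orbT.
Qed.

Lemma full_blue_across i e : e \in s.2 -> ~~ (e \subset phi @: vset F i).
Proof.
move=> /(inv_blue inv)[[u [v [_ _ uv _ ->]]]|[c [w [_ _ wN ->]]]]; apply/negP => /subsetP sub.
  have := sub (phi u); have := sub (phi v); rewrite !inE !eqxx orbT !mem_full_image !inE.
  by move=> /(_ isT)/eqP Ev /(_ isT)/eqP Eu; rewrite Eu Ev eqxx in uv.
by have /imsetP[z _ Ew] := sub w (setU1r _ (set11 _)); move: wN; rewrite Ew imset_f ?inE.
Qed.

Lemma full_red_inside i e : e \in s.1 -> e \subset phi @: vset F i ->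
  exists x y, [/\ adj F x y, part F x = i & e = [set phi x; phi y]].
Proof.
move=> /full_red[c cNR ->] /subsetP/(_ (phi c) (setU11 _ _)).
by rewrite mem_full_image inE => /eqP ci; exists c, (parent c); rewrite adj_parent.
Qed.

Lemma full_colored_meets e : e \in s.1 :|: s.2 -> ~~ [disjoint e & phi @: [set: V]].
Proof.
have meets z e' : phi z \in e' -> ~~ [disjoint e' & phi @: [set: V]].
  by move=> ze; apply/negP => /disjointFr/(_ ze); rewrite imset_f ?inE.
case/setUP => [/full_red[c _ ->]|/(inv_blue inv)[[u [v [_ _ _ _ ->]]]|[c [w [_ _ _ ->]]]]];
  exact: meets (setU11 _ _).
Qed.

Lemma full_outside w : w \notin phi @: [set: V] ->
  #|[set e in s.1 :|: s.2 | w \in e]| <= 1 /\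
  (forall e u, e \in s.1 :|: s.2 -> w \in e -> u \in e -> u != w -> u \notin phi @: leaves F).
Proof.
move=> wN; have wNred e : e \in s.1 -> w \notin e.
  by case/full_red=> c _ ->; rewrite !inE !(full_image_neq _ wN).
split.
  suff -> : [set e in s.1 :|: s.2 | w \in e] = [set e in s.2 | w \in e].
    exact: (inv_blue_deg inv).
  apply/setP => e; rewrite !inE; have [/wNred/negbTE->|] := boolP (e \in s.1) => //=.
  by rewrite andbF.
move=> e u /setUP[/wNred/negP//|/(inv_blue inv)] [[a [b [_ _ _ _ ->]]]|[c [w' [_ cNR _ ->]]]].
  by rewrite !inE !(full_image_neq _ wN).
rewrite !inE (full_image_neq _ wN) /= => /eqP-> /orP[/eqP->|/eqP->]; last by rewrite eqxx.
by rewrite mem_full_image parent_notin_leaves.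
Qed.

Lemma good_copy_full : good_copy F rho s.
Proof.
exists phi; split; [split | split | split | |].
- exact: full_inj.
- exact: full_adj_red.
- exact: (inv_rho inv).
- exact: full_roots_uncolored.
- exact: full_blue_across.
- exact: full_red_inside.
- exact: full_colored_meets.
- exact: full_outside.
Qed.
End CompleteCopy.

Lemma free_edge_fresh E phi s p u : copy_inv E phi s -> p \in E -> u \in fresh E phi s ->
  free_edge s [set phi p; u].
Proof.
move=> inv pE uF; apply: free_edge_to_new inv pE (fresh_notin_image uF) _.
by apply/negP => /(fresh_notin_blue uF)/negP; apply; rewrite !inE eqxx orbT.
Qed.

Definition forces_from k := forall E phi s, #|~: E| = k -> copy_inv E phi s ->
  balanced #|fresh E phi s| (profile E) -> waiter_forces (good_copy F rho) k s.

Lemma move_single k E phi s i : forces_from k -> #|~: E| = k.+1 -> copy_inv E phi s ->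
  0 < profile E i -> 1 < #|fresh E phi s| ->
  balanced (#|fresh E phi s| - 2) (dec (profile E) i) -> waiter_forces (good_copy F rho) k.+1 s.
Proof.
move=> IH Ek inv /(frontier_in_part inv)[x [xNE <- pxE]] /card_gt1P[u1 [u2 [u1F u2F u12]]] bal.
have offer u u' : u \in fresh E phi s -> u' \in fresh E phi s -> u != u' ->
    waiter_forces (good_copy F rho) k
      ([set phi (parent x); u] |: s.1, [set phi (parent x); u'] |: s.2).
  move=> uF u'F uu'; have [inv' fresh'] := offer_fresh_pair inv xNE pxE uF u'F uu'.
  apply: IH inv' _; first by rewrite cardsC_U1 // Ek.
  exact: balanced_extend xNE bal fresh'.
have u21 : u2 != u1 by rewrite eq_sym.
apply: (waiter_offer _ _ _ (offer _ _ u1F u2F u12) (offer _ _ u2F u1F u21)).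
- exact: free_edge_fresh inv pxE u1F.
- exact: free_edge_fresh inv pxE u2F.
- by apply: contraNneq u12 => /set2_inj_r ->.
Qed.

Lemma move_pair k E phi s i j : forces_from k -> #|~: E| = k.+1 -> copy_inv E phi s -> i != j ->
  0 < profile E i -> 0 < profile E j -> 0 < #|fresh E phi s| ->
  balanced (#|fresh E phi s| - 1) (dec (profile E) i) ->
  balanced (#|fresh E phi s| - 1) (dec (profile E) j) -> waiter_forces (good_copy F rho) k.+1 s.
Proof.
move=> IH Ek inv ij /(frontier_in_part inv)[x [xNE Ex pxE]] /(frontier_in_part inv)[y [yNE Ey pyE]].
case/card_gt0P=> u uF; rewrite -Ex -Ey in ij * => bal_x bal_y.
have offer x' y' : x' \notin E -> parent x' \in E -> y' \notin E -> parent y' \in E ->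
    part F x' != part F y' -> balanced (#|fresh E phi s| - 1) (dec (profile E) (part F x')) ->
    waiter_forces (good_copy F rho) k
      ([set phi (parent x'); u] |: s.1, [set phi (parent y'); u] |: s.2).
  move=> x'NE px'E y'NE py'E x'y' bal.
  have [inv' fresh'] := offer_fresh_shared inv x'NE px'E y'NE py'E x'y' uF.
  apply: IH inv' _; first by rewrite cardsC_U1 // Ek.
  exact: balanced_extend x'NE bal fresh'.
have ji : part F y != part F x by rewrite eq_sym.
apply: (waiter_offer _ _ _ (offer x y _ _ _ _ ij bal_x) (offer y x _ _ _ _ ji bal_y)) => //.
- exact: free_edge_fresh inv pxE uF.
- exact: free_edge_fresh inv pyE uF.
- apply: contraNneq ij => /set2_inj_l/(inv_inj inv pxE pyE) Epar.
  by rewrite -(part_parent (notin_inv_roots inv xNE)) Epar part_parent ?(notin_inv_roots inv yNE).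
Qed.

Lemma move_pendant k E phi s y z z0 w : forces_from k -> #|~: E| = k.+1 -> copy_inv E phi s ->
  y \notin E -> parent y \in E -> z \notin E -> parent z \in E -> part F y != part F z ->
  w \notin phi @: E -> z0 \in E -> [set phi z0; w] \in s.2 ->
  part F z0 != part F y -> part F z0 != part F z ->
  balanced #|fresh E phi s| (dec (profile E) (part F y)) ->
  balanced #|fresh E phi s| (dec (profile E) (part F z)) -> waiter_forces (good_copy F rho) k.+1 s.
Proof.
move=> IH Ek inv yNE pyE zNE pzE yz wN z0E z0w z0y z0z bal_y bal_z.
have w_in q : w \in [set phi q; w] by rewrite !inE eqxx orbT.
have free_to q : q \notin E -> parent q \in E -> part F z0 != part F q ->
    free_edge s [set phi (parent q); w].
  move=> qNE pqE z0q; apply: (free_edge_to_new inv pqE wN); apply/negP => pqw.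
  move: z0q; have := blue_edge_uniq inv wN pqw (w_in _) z0w (w_in _).
  move=> /set2_inj_l/(inv_inj inv pqE z0E) <-.
  by rewrite part_parent ?(notin_inv_roots inv qNE) ?eqxx.
have offer y' z' : y' \notin E -> parent y' \in E -> z' \notin E -> parent z' \in E ->
    part F y' != part F z' -> part F z0 != part F y' ->
    balanced #|fresh E phi s| (dec (profile E) (part F y')) ->
    waiter_forces (good_copy F rho) k
      ([set phi (parent y'); w] |: s.1, [set phi (parent z'); w] |: s.2).
  move=> y'NE py'E z'NE pz'E y'z' z0y' bal.
  have [inv' fresh'] := offer_pendant_shared inv y'NE py'E z'NE pz'E y'z' wN z0E z0w z0y'.
  apply: IH inv' _; first by rewrite cardsC_U1 // Ek.
  exact: balanced_extend y'NE bal fresh'.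
have zy : part F z != part F y by rewrite eq_sym.
apply: (waiter_offer _ _ _ (offer y z _ _ _ _ yz z0y bal_y) (offer z y _ _ _ _ zy z0z bal_z))
  => //; try exact: free_to.
apply: contraNneq yz => /set2_inj_l/(inv_inj inv pyE pzE) Epar.
by rewrite -(part_parent (notin_inv_roots inv yNE)) Epar part_parent ?(notin_inv_roots inv zNE).
Qed.

Lemma move_chain k E phi s i j c : forces_from k -> #|~: E| = k.+2 -> copy_inv E phi s ->
  uniq [:: i; j; c] -> 0 < profile E i -> 0 < profile E j -> 0 < profile E c ->
  1 < #|fresh E phi s| ->
  balanced (#|fresh E phi s| - 2) (dec (dec (profile E) i) j) ->
  balanced (#|fresh E phi s| - 2) (dec (dec (profile E) i) c) ->
  waiter_forces (good_copy F rho) k.+2 s.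
Proof.
move=> IH Ek inv /and3P[]; rewrite !inE negb_or => /andP[ij ic] jc _.
move=> /(frontier_in_part inv)[x [xNE Ex pxE]] /(frontier_in_part inv)[y [yNE Ey pyE]].
move=> /(frontier_in_part inv)[z [zNE Ez pzE]] /card_gt1P[u1 [u2 [u1F u2F u12]]].
rewrite -Ex -Ey -Ez in ij ic jc * => bal_y bal_z.
have xNR := notin_inv_roots inv xNE.
(* The blue edge of the first round is the only coloured edge at [u'], so [u'] can be the shared
   endpoint of the second round without using up a fresh vertex. *)
have first_round u u' : u \in fresh E phi s -> u' \in fresh E phi s -> u != u' ->
    waiter_forces (good_copy F rho) k.+1
      ([set phi (parent x); u] |: s.1, [set phi (parent x); u'] |: s.2).
  move=> uF u'F uu'; have [inv1 fresh1] := offer_fresh_pair inv xNE pxE uF u'F uu'.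
  have notin1 q : q \notin E -> part F x != part F q -> q \notin x |: E.
    by move=> qNE xq; rewrite in_setU1 negb_or qNE andbT; apply: contraNneq xq => ->.
  have bal1 q : balanced (#|fresh E phi s| - 2) (dec (dec (profile E) (part F x)) (part F q)) ->
      balanced #|fresh (x |: E) (extend phi x u)
                   ([set phi (parent x); u] |: s.1, [set phi (parent x); u'] |: s.2)|
        (dec (profile (x |: E)) (part F q)).
    move=> bal; apply: balanced_le fresh1 _; apply: balanced_eq bal => p.
    by rewrite /dec profile_extend.
  have u'N : u' \notin extend phi x u @: (x |: E).
    by rewrite imset_extend // in_setU1 negb_or eq_sym uu' (fresh_notin_image u'F).
  have px_u' : [set extend phi x u (parent x); u'] \in [set phi (parent x); u'] |: s.2.
    by rewrite extend_other ?(memPn xNE) ?setU11.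
  apply: (move_pendant IH _ inv1 (notin1 y yNE ij) (setU1r _ pyE) (notin1 z zNE ic) (setU1r _ pzE)
            jc u'N (setU1r _ pxE) px_u' _ _ (bal1 y bal_y) (bal1 z bal_z)).
  - by rewrite cardsC_U1 // Ek.
  - by rewrite part_parent.
  - by rewrite part_parent.
have u21 : u2 != u1 by rewrite eq_sym.
apply: (waiter_offer _ _ _ (first_round _ _ u1F u2F u12) (first_round _ _ u2F u1F u21)).
- exact: free_edge_fresh inv pxE u1F.
- exact: free_edge_fresh inv pxE u2F.
- by apply: contraNneq u12 => /set2_inj_r ->.
Qed.

Lemma forces_all k : forces_from k.
Proof.
elim/ltn_ind: k => k IH E phi s Ek inv bal.
case: k IH Ek => [|k] IH Ek.
  by left; move: inv; rewrite -[E]setCK (cards0_eq Ek) setC0; apply: good_copy_full.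
have IHk : forces_from k by apply: IH.
have sum_gt0 : 0 < \sum_i profile E i by rewrite sum_profile Ek.
case: (balanced_move bal sum_gt0).
- case=> i [pos_i bal_i].
  exact: move_single IHk Ek inv pos_i (balanced_gt1 bal pos_i) bal_i.
- case=> i [j [ij pos_i pos_j bal_i bal_j]].
  exact: move_pair IHk Ek inv ij pos_i pos_j (ltnW (balanced_gt1 bal pos_i)) bal_i bal_j.
case=> i [j [c [ijc /and3P[pos_i pos_j pos_c] bal_j bal_c]]].
case: k IH IHk Ek => [|k] IH _ Ek.
  move: ijc => /and3P[]; rewrite inE negb_or => /andP[ij _] _ _.
  by have := leq_sum2 (profile E) ij; rewrite sum_profile Ek; lia.
exact: (move_chain (IH k (leqW (ltnSn k))) Ek inv ijc pos_i pos_j pos_c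
          (balanced_gt1 bal pos_i) bal_j bal_c).
Qed.

Lemma copy_inv_roots : {in R &, injective rho} -> copy_inv R rho (set0, set0).
Proof.
move=> rho_inj; split=> //= [x -> //||e|w _]; first by rewrite /parent_edges setDv imset0.
  by rewrite inE.
suff -> : [set e : {set 'I_N} in set0 | w \in e] = set0 by rewrite cards0.
by apply/setP => e; rewrite !inE.
Qed.

Lemma card_fresh_roots : {in R &, injective rho} -> #|fresh R rho (set0, set0)| = N - #|R|.
Proof.
move=> rho_inj; have -> : fresh R rho (set0, set0) = ~: (rho @: R).
  by apply/setP => v; rewrite !inE setU0 /cover big_set0 inE andbT.
by have := cardsC (rho @: R); rewrite card_in_imset // card_ord; lia.
Qed.

Lemma profile_roots : profile R =1 e_i F.
Proof. by move=> i; rewrite e_i_non_roots. Qed.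
End Game.
End Forest.

Lemma e_i_valid_sub (V W : finType) (F : rft V) (G : rft W) f (ell_le : ell F <= ell G) p :
  valid_sub F G f -> e_i F p <= e_i G (widen_ord ell_le p).
Proof.
case=> f_inj _ f_part f_adj _; rewrite /e_i -(card_imset _ (imset_inj f_inj)).
apply: subset_leq_card; apply/subsetP => _ /imsetP[e /setIdP[e_edge e_sub] ->].
rewrite inE; apply/andP; split.
  move: e_edge; rewrite inE => /existsP[x /existsP[y /andP[xy /eqP ->]]].
  rewrite inE; apply/existsP; exists (f x); apply/existsP; exists (f y).
  by rewrite f_adj //= imsetU1 imset_set1.
apply/subsetP => _ /imsetP[x /(subsetP e_sub) x_p ->]; rewrite inE.
by apply/eqP/val_inj; rewrite /= f_part; move: x_p; rewrite inE => /eqP->.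
Qed.

Lemma kF_gt0 (W : finType) (G : rft W) (j : 'I_(ell G)) : 0 < kF G.
Proof.
have [|j0 Ej0] := eq_bigmax (e_i G); first by rewrite card_ord (leq_ltn_trans _ (ltn_ord j)).
by apply/card_gt0P; exists j0; rewrite inE /aF Ej0.
Qed.

Lemma kF_gt1 (W : finType) (G : rft W) (j j' : 'I_(ell G)) :
  j != j' -> e_i G j = aF G -> e_i G j' = aF G -> 1 < kF G.
Proof.
move=> jj' Ej Ej'; have := cards2 j j'; rewrite jj' => <-.
by apply: subset_leq_card; apply/subsetP => z; rewrite !inE => /orP[]/eqP->; rewrite ?Ej ?Ej'.
Qed.

Lemma m_suitable_balanced m (V : finType) (F : rft V) :
  m_suitable m F -> \sum_i e_i F i < m -> balanced m (e_i F).
Proof.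
(* e(F_i) <= e(G_i) <= a(G), and at most k(G) indices reach a(G). *)
move=> [W [G [f [_ suitG <- f_sub]]]] sum_lt; have ell_le : ell F <= ell G by case: f_sub.
pose g p := widen_ord ell_le p.
have g_neq p q : p != q -> g p != g q.
  by move=> pq; apply: contraNneq pq => /(congr1 val) Epq; apply/eqP/val_inj.
have le_e p : e_i F p <= e_i G (g p) := e_i_valid_sub ell_le p f_sub.
have le_a j : e_i G j <= aF G by apply: leq_bigmax.
split=> // [p q pq|p]; have := le_e p; have := le_a (g p); have := kF_gt0 (g p).
  have := le_e q; have := le_a (g q); have := leq_sum2 (e_i F) pq.
  case: suitG => [small|[-> _]]; last by lia.
  have [ep_a|] := eqVneq (e_i G (g p)) (aF G); last by move/eqP; lia.
  have [eq_a|] := eqVneq (e_i G (g q)) (aF G); last by move/eqP; lia.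
  by have := kF_gt1 (g_neq _ _ pq) ep_a eq_a; lia.
by have := leq_sum1 (e_i F) p; case: suitG => [|[-> _]]; lia.
Qed.

Theorem lemma3p18 (m : nat) (V : finType) (F : rft V) :
  is_rft F -> m_suitable m F -> eF F < m ->
  forall rho : V -> 'I_(m + vF V - eF F),
  {in rroots F &, injective rho} ->
  waiter_forces (good_copy F rho) (eF F) (set0, set0).
Proof.
move=> [[adj_sym adj_irr] adj_part acyclic one_root _] suitF eF_lt rho rho_inj.
have eF_NR : eF F = #|~: rroots F| by apply: eF_non_roots.
have profile0 := profile_roots adj_sym adj_irr acyclic one_root adj_part.
apply: (forces_all adj_sym adj_irr acyclic adj_part (esym eF_NR) (copy_inv_roots one_root rho_inj)).
rewrite card_fresh_roots //.
have -> : m + vF V - eF F - #|rroots F| = m by rewrite eF_NR /vF -(cardsC (rroots F)); lia.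
apply: balanced_eq (fun i => esym (profile0 i)) (m_suitable_balanced suitF _).
by rewrite -(eq_bigr _ (fun i _ => profile0 i)) sum_profile -eF_NR.
Qed.
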